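(* Let $A,B\in\mathbb{R}^{m\times n}$ and $b\in\mathbb{R}^m$ with $\operatorname{rank}(A) = m$ and $m<n$, and let $1\le p\le\infty$. If $A^\dagger b\geq 0$, $A^\dagger B\geq0$ and $\|A^\dagger B\|_p<1$, then the equation $Ax-B|x|=b$ has at least one nonnegative solution.
   Context: $A^\dagger$ is the Moore–Penrose inverse; $|x|$ is the entrywise absolute value; vector/matrix inequalities are entrywise; $\|\cdot\|_p$ on matrices is the operator norm induced by the vector $p$-norm. *)

From HB Require Import structures.
From mathcomp Require Import all_boot all_order all_algebra.
From mathcomp Require Import all_classical all_reals all_analysis.
Set Implicit Arguments. Unset Strict Implicit. Unset Printing Implicit Defensive.
Import Order.TTheory GRing.Theory Num.Theory.
Local Open Scope ring_scope.
Local Open Scope classical_set_scope.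

(* The four Penrose conditions (real matrices: transpose = adjoint). *)
Definition penrose (R : realType) (m n : nat) (A : 'M[R]_(m, n)) (X : 'M[R]_(n, m)) : Prop :=
  [/\ A *m X *m A = A, X *m A *m X = X,
      (A *m X)^T = A *m X & (X *m A)^T = X *m A].

Definition mpinv (R : realType) (m n : nat) (A : 'M[R]_(m, n)) : 'M[R]_(n, m) :=
  xget 0 [set X | penrose A X].

Definition absmx (R : realType) (m n : nat) (M : 'M[R]_(m, n)) : 'M[R]_(m, n) :=
  map_mx (fun x => `|x|) M.
Definition nonneg_mx (R : realType) (m n : nat) (M : 'M[R]_(m, n)) : Prop :=
  forall i j, 0 <= M i j.

Definition vnorm (R : realType) (n : nat) (p : \bar R) (x : 'cV[R]_n) : R :=
  match p with
  | EFin r => (\sum_(i < n) `|x i 0| `^ r) `^ r^-1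
  | _ => \big[Num.max/0]_(i < n) `|x i 0|
  end.

Definition opnorm (R : realType) (n k : nat) (p : \bar R) (M : 'M[R]_(k, n)) : R :=
  sup [set vnorm p (M *m x) / vnorm p x | x in [set x : 'cV[R]_n | x != 0]].

From HB Require Import structures.
From mathcomp Require Import all_boot all_order all_algebra.
From mathcomp Require Import all_classical all_reals all_analysis.
Import Order.TTheory GRing.Theory Num.Theory.
Local Open Scope ring_scope.
Set Implicit Arguments. Unset Strict Implicit. Unset Printing Implicit Defensive.

(* Since A has full row rank, A A^+ = 1; so, writing C := A^+ B and c := A^+ b,
   any y >= 0 with y = c + C y solves the equation, because then
   A y - B |y| = A A^+ (b + B y) - B y = b.
   The bound ||C||_p < 1 rules out every nonzero u with 0 <= u <= C u.  Applied
   to u = |w| for a fixed point w of C this makes 1 - C invertible, and applied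
   to the negative part of y = (1 - C)^-1 c it shows y >= 0, as C, c >= 0. *)

Section VectorNorms.
Variable R : realType.
Implicit Types (p : \bar R) (k n : nat).

Lemma vnorm_pinfty_ge0 k (x : 'cV[R]_k) : 0 <= vnorm +oo%E x.
Proof. exact: bigmax_ge_id. Qed.

Lemma le_vnorm_pinfty k (x : 'cV[R]_k) i : `|x i 0| <= vnorm +oo%E x.
Proof. exact: le_bigmax. Qed.

Lemma vnorm_pinfty_gt0 k (x : 'cV[R]_k) : x != 0 -> 0 < vnorm +oo%E x.
Proof.
move=> x_neq0; have [i xi_neq0] : exists i, x i 0 != 0.
  apply/existsP; apply: contraNT x_neq0 => /existsPn x_eq0.
  by apply/eqP/matrixP => i j; rewrite (ord1 j) mxE; exact/eqP/negPn/x_eq0.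
by apply: lt_le_trans (le_vnorm_pinfty x i); rewrite normr_gt0.
Qed.

Lemma powRK (r a : R) : 0 < r -> 0 <= a -> (a `^ r) `^ r^-1 = a.
Proof. by move=> r_gt0 a_ge0; rewrite -powRrM mulfV ?gt_eqF // powRr1. Qed.

Lemma vnorm_pinfty_le p k (x : 'cV[R]_k) : (1 <= p)%E ->
  vnorm +oo%E x <= vnorm p x.
Proof.
case: p => [r||] //=; rewrite lee_fin => r_ge1.
have r_gt0 : 0 < r by apply: lt_le_trans r_ge1.
apply: bigmax_le => [|i _]; first exact: powR_ge0.
rewrite -[leLHS](powRK r_gt0) //.
apply: ge0_ler_powR; rewrite ?nnegrE ?invr_ge0 ?(ltW r_gt0) ?powR_ge0 ?sumr_ge0 //.
by rewrite (bigD1 i) //= lerDl sumr_ge0.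
Qed.

Lemma vnorm_le_pinfty p k (x : 'cV[R]_k) : (1 <= p)%E ->
  vnorm p x <= k.+1%:R * vnorm +oo%E x.
Proof.
have M_ge0 := vnorm_pinfty_ge0 x; have le_M := le_vnorm_pinfty x.
move: M_ge0 le_M; set M := vnorm +oo%E x => M_ge0 le_M.
case: p => [r||] //=; last by move=> _; rewrite ler_peMl // ler1n.
rewrite lee_fin => r_ge1; have r_gt0 : 0 < r by apply: lt_le_trans r_ge1.
rewrite -[leRHS](powRK r_gt0) ?mulr_ge0 //.
apply: ge0_ler_powR; rewrite ?nnegrE ?invr_ge0 ?(ltW r_gt0) ?powR_ge0 ?sumr_ge0 //.
apply: (@le_trans _ _ (\sum_(i < k) M `^ r)).
  by apply: ler_sum => i _; apply: ge0_ler_powR; rewrite ?nnegrE ?(ltW r_gt0).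
rewrite sumr_const card_ord -[_ *+ k]mulr_natl powRM // ler_wpM2r ?powR_ge0 //.
by rewrite (le_trans _ (le1r_powR _ _)) ?ler_nat ?ler1n.
Qed.

Lemma le_vnorm p k (u w : 'cV[R]_k) : (1 <= p)%E ->
  (forall i, `|u i 0| <= `|w i 0|) -> vnorm p u <= vnorm p w.
Proof.
move=> + uw; case: p => [r||] //=; last by move=> _; exact: le_bigmax2.
rewrite lee_fin => r_ge1; have r_gt0 : 0 < r by apply: lt_le_trans r_ge1.
apply: ge0_ler_powR; rewrite ?nnegrE ?invr_ge0 ?(ltW r_gt0) ?powR_ge0 ?sumr_ge0 //.
by apply: ler_sum => i _; apply: ge0_ler_powR; rewrite ?nnegrE ?(ltW r_gt0).
Qed.

Lemma vnorm_gt0 p k (x : 'cV[R]_k) : (1 <= p)%E -> x != 0 -> 0 < vnorm p x.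
Proof.
by move=> p_ge1 /vnorm_pinfty_gt0/lt_le_trans; apply; exact: vnorm_pinfty_le.
Qed.

Lemma vnorm_pinfty_mul k n (C : 'M[R]_(k, n)) (x : 'cV[R]_n) :
  vnorm +oo%E (C *m x) <= (\sum_i \sum_j `|C i j|) * vnorm +oo%E x.
Proof.
have S_ge0 : 0 <= \sum_i \sum_j `|C i j| by do 2!apply: sumr_ge0 => ? _.
apply: bigmax_le => [|i _]; first by rewrite mulr_ge0 ?vnorm_pinfty_ge0.
rewrite mxE (le_trans (ler_norm_sum _ _ _)) //.
apply: (@le_trans _ _ (\sum_j `|C i j| * vnorm +oo%E x)).
  by apply: ler_sum => j _; rewrite normrM ler_wpM2l ?le_vnorm_pinfty.
rewrite -mulr_suml ler_wpM2r ?vnorm_pinfty_ge0 //.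
by rewrite (bigD1 i) //= lerDl; do 2!apply: sumr_ge0 => ? _.
Qed.

Lemma opnorm_has_ubound p k n (C : 'M[R]_(k, n)) : (1 <= p)%E ->
  has_ubound [set vnorm p (C *m x) / vnorm p x | x in [set x : 'cV[R]_n | x != 0]].
Proof.
move=> p_ge1; exists (k.+1%:R * \sum_i \sum_j `|C i j|) => _ [x /= x_neq0 <-].
rewrite ler_pdivrMr ?vnorm_gt0 // (le_trans (vnorm_le_pinfty _ p_ge1)) //.
rewrite -mulrA ler_wpM2l // (le_trans (vnorm_pinfty_mul _ _)) //.
by rewrite ler_wpM2l ?vnorm_pinfty_le //; do 2!apply: sumr_ge0 => ? _.
Qed.

Lemma le_opnorm p k n (C : 'M[R]_(k, n)) (x : 'cV[R]_n) : (1 <= p)%E ->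
  x != 0 -> vnorm p (C *m x) / vnorm p x <= opnorm p C.
Proof.
by move=> p_ge1 x_neq0; apply: (ub_le_sup (opnorm_has_ubound C p_ge1)); exists x.
Qed.

Lemma opnorm_ge1 p n (C : 'M[R]_n) (u : 'cV[R]_n) : (1 <= p)%E ->
  u != 0 -> (forall i, 0 <= u i 0 <= (C *m u) i 0) -> 1 <= opnorm p C.
Proof.
move=> p_ge1 u_neq0 u_sub; apply: le_trans (le_opnorm C p_ge1 u_neq0).
rewrite ler_pdivlMr ?vnorm_gt0 // mul1r le_vnorm // => i.
by have /andP[ui_ge0 ui_le] := u_sub i; rewrite !ger0_norm ?(le_trans ui_ge0).
Qed.

End VectorNorms.

Lemma absmx_eq0 (R : realType) m n (M : 'M[R]_(m, n)) : (absmx M == 0) = (M == 0).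
Proof.
apply/eqP/eqP => [M0|->]; last by apply/matrixP => i j; rewrite !mxE normr0.
by apply/matrixP => i j; move/matrixP/(_ i j): M0; rewrite !mxE => /normr0_eq0.
Qed.

Lemma absmx_id (R : realType) m n (M : 'M[R]_(m, n)) : nonneg_mx M -> absmx M = M.
Proof. by move=> M_ge0; apply/matrixP => i j; rewrite mxE ger0_norm. Qed.

Section NonnegativeFixpoint.
Variables (R : realType) (n : nat) (C : 'M[R]_n).
Hypothesis C_ge0 : nonneg_mx C.
Hypothesis C_subinv : forall u : 'cV[R]_n,
  (forall i, 0 <= u i 0 <= (C *m u) i 0) -> u = 0.

Lemma fixpoint_eq0 (w : 'cV[R]_n) : C *m w = w -> w = 0.
Proof.
move=> Cw; apply/eqP; rewrite -absmx_eq0; apply/eqP/C_subinv => i.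
rewrite mxE normr_ge0 -{1}Cw !mxE (le_trans (ler_norm_sum _ _ _)) //.
by apply: ler_sum => j _; rewrite normrM ger0_norm ?mxE.
Qed.

Lemma unitmx_1_sub : 1%:M - C \in unitmx.
Proof.
rewrite -unitmx_tr -row_free_unit; apply: inj_row_free => v v_ker.
have : (1%:M - C) *m v^T = 0 by rewrite -[LHS]trmxK trmx_mul trmxK v_ker trmx0.
rewrite mulmxBl mul1mx => /eqP; rewrite subr_eq0 eq_sym => /eqP/fixpoint_eq0 vT0.
by rewrite -[v]trmxK vT0 trmx0.
Qed.

Lemma fixpoint_ge0 (c y : 'cV[R]_n) :
  nonneg_mx c -> y = c + C *m y -> nonneg_mx y.
Proof.
move=> c_ge0 y_fix; set u := map_mx (fun t => Num.max (- t) 0) y.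
have u_ge0 i : 0 <= u i 0 by rewrite mxE le_max lexx orbT.
suff u_eq0 : u = 0.
  move=> i j; rewrite (ord1 j); move/matrixP/(_ i 0): u_eq0.
  by rewrite !mxE => /max_idPr; rewrite oppr_le0.
apply: C_subinv => i; rewrite u_ge0 /=.
have Cu_ge0 : 0 <= (C *m u) i 0 by rewrite mxE sumr_ge0 // => j _; rewrite mulr_ge0.
rewrite [u i 0]mxE ge_max Cu_ge0 andbT.
have -> : - y i 0 = - c i 0 + \sum_j C i j * - y j 0.
  by rewrite {1}y_fix !mxE opprD -sumrN; under [in RHS]eq_bigr do rewrite mulrN.
apply: ler_wnDl; first by rewrite oppr_le0 c_ge0.
by rewrite mxE; apply: ler_sum => j _; rewrite ler_wpM2l // mxE le_max lexx.
Qed.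

Lemma exists_nonneg_fixpoint (c : 'cV[R]_n) :
  nonneg_mx c -> exists2 y : 'cV[R]_n, nonneg_mx y & y = c + C *m y.
Proof.
set y := invmx (1%:M - C) *m c.
have y_fix : y = c + C *m y.
  apply/eqP; rewrite -subr_eq -[X in X - _]mul1mx -mulmxBl.
  by rewrite mulKVmx ?unitmx_1_sub.
by move=> c_ge0; exists y => //; exact: fixpoint_ge0 y_fix.
Qed.

End NonnegativeFixpoint.

Lemma trmx_mul_self_eq0 (R : realDomainType) n (v : 'cV[R]_n) :
  v^T *m v = 0 -> v = 0.
Proof.
move/matrixP/(_ 0 0); rewrite !mxE => sum_sq0.
have /psumr_eq0P sq0 : \sum_i v i 0 ^+ 2 = 0.
  by rewrite -[RHS]sum_sq0; apply: eq_bigr => i _; rewrite mxE expr2.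
apply/matrixP => i j; rewrite (ord1 j) mxE; apply/eqP.
by rewrite -sqrf_eq0 sq0 // => k _; exact: sqr_ge0.
Qed.

Lemma unitmx_mul_tr (R : realFieldType) m n (A : 'M[R]_(m, n)) :
  row_free A -> A *m A^T \in unitmx.
Proof.
move=> A_free; rewrite -row_free_unit; apply: inj_row_free => v vAAT0.
apply/eqP; rewrite -(mulmx_free_eq0 _ A_free); apply/eqP/trmx_inj.
rewrite trmx0; apply: trmx_mul_self_eq0.
by rewrite !trmx_mul !trmxK mulmxA -(mulmxA v) vAAT0 !mul0mx.
Qed.

Section MoorePenroseFullRowRank.
Variable R : realType.

Lemma penrose_row_free m n (A : 'M[R]_(m, n)) :
  row_free A -> penrose A (A^T *m invmx (A *m A^T)).
Proof.
move=> A_free; have AAT_unit := unitmx_mul_tr A_free.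
have AX : A *m (A^T *m invmx (A *m A^T)) = 1%:M by rewrite mulmxA mulmxV.
split; first by rewrite AX mul1mx.
- by rewrite -mulmxA AX mulmx1.
- by rewrite AX trmx1.
- by rewrite !trmx_mul trmxK trmx_inv trmx_mul trmxK mulmxA.
Qed.

Lemma mulmx_mpinv m n (A : 'M[R]_(m, n)) : row_free A -> A *m mpinv A = 1%:M.
Proof.
move=> A_free; have [AXA _ _ _] : penrose A (mpinv A).
  apply: (@xgetPex _ 0 [set X | penrose A X]).
  by exists (A^T *m invmx (A *m A^T)); exact: penrose_row_free.
apply/eqP; rewrite -subr_eq0 -(mulmx_free_eq0 _ A_free).
by rewrite mulmxBl AXA mul1mx subrr.
Qed.

End MoorePenroseFullRowRank.

Theorem corollary3p7 (R : realType) (m n : nat)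
  (A B : 'M[R]_(m, n)) (b : 'cV[R]_m) (p : \bar R) :
  \rank A = m -> (m < n)%N -> (1 <= p)%E ->
  nonneg_mx (mpinv A *m b) -> nonneg_mx (mpinv A *m B) ->
  opnorm p (mpinv A *m B) < 1 ->
  exists x : 'cV[R]_n, nonneg_mx x /\ A *m x - B *m absmx x = b.
Proof.
move=> rankA _ p_ge1 c_ge0 C_ge0 C_lt1.
have A_free : row_free A by rewrite /row_free rankA.
have C_subinv (u : 'cV[R]_n) :
    (forall i, 0 <= u i 0 <= (mpinv A *m B *m u) i 0) -> u = 0.
  move=> u_sub; apply/eqP; apply: contraTT C_lt1 => u_neq0.
  by rewrite -leNgt (opnorm_ge1 p_ge1 u_neq0 u_sub).
have [y y_ge0 y_fix] := exists_nonneg_fixpoint C_ge0 C_subinv c_ge0.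
exists y; split => //.
by rewrite absmx_id // {1}y_fix mulmxDr !mulmxA mulmx_mpinv // !mul1mx addrK.
Qed.
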